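(* Let $A$ be a commutative ring and let $(a,b)$ be a unimodular row. The following are equivalent: (1) There exist $a_0,\ldots,a_n\in A$ such that $[a,b]=\infty\cdot S(a_n)S(a_{n-1})\cdots S(a_0)$. (2) There exist $a_0,\ldots,a_n,r_0,\ldots,r_{n-1}\in A$ such that, setting $r_{-2}:=a$, $r_{-1}:=b$, $r_n:=0$, one has $r_{k-2}=a_kr_{k-1}+r_k$ for $0\le k\le n$.
   Context: A unimodular row over $A$ is $(a,b)\in A^2$ with $aA+bA=A$; $[a,b]$ denotes its class modulo multiplication by units of $A$. $\mathrm{GL}_2(A)$ acts on these classes on the right by $[u]\cdot M=[uM]$; $\infty=[1,0]$. $S(a)=\begin{pmatrix}a&1\\1&0\end{pmatrix}$. *)

From HB Require Import structures.
From mathcomp Require Import all_boot all_order all_algebra.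
Set Implicit Arguments. Unset Strict Implicit. Unset Printing Implicit Defensive.
Import GRing.Theory.
Local Open Scope ring_scope.

(* A commutative ring (possibly the zero ring): comPzRingType. *)

Definition is_unit (A : comPzRingType) (u : A) : Prop := exists v : A, u * v = 1.

Definition unimodular (A : comPzRingType) (a b : A) : Prop :=
  exists x y : A, a * x + b * y = 1.

Definition row2 (A : comPzRingType) (a b : A) : 'rV[A]_2 :=
  \row_(j < 2) (if j == 0 :> nat then a else b).

Definition same_class (A : comPzRingType) (u v : 'rV[A]_2) : Prop :=
  exists lam : A, is_unit lam /\ u = lam *: v.

(* S(c) = [[c,1],[1,0]] *)
Definition Smx (A : comPzRingType) (c : A) : 'M[A]_2 :=
  \matrix_(i < 2, j < 2)
    (if (i == 0 :> nat) && (j == 0 :> nat) then c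
     else if (i == 1 :> nat) && (j == 1 :> nat) then 0 else 1).

Fixpoint Sprod (A : comPzRingType) (q : nat -> A) (n : nat) : 'M[A]_2 :=
  match n with
  | 0 => Smx (q 0)
  | k.+1 => Smx (q k.+1) *m Sprod q k
  end.

Definition inf_row (A : comPzRingType) : 'rV[A]_2 := row2 1 0.

(* Remainder sequence shifted by 2: remseq a b r n j = r_{j-2}, where
   r_{-2} = a, r_{-1} = b, r_n = 0, and r_k = r k for 0 <= k <= n-1. *)
Definition remseq (A : comPzRingType) (a b : A) (r : nat -> A) (n j : nat) : A :=
  if j == 0 then a
  else if j == 1 then b
  else if j == n.+2 then 0
  else r (j - 2)%N.

(* Right multiplication by S(c) is one step of a Euclidean-type division:
   (x, y) S(c) = (x c + y, x).  Hence s_k = q_k s_{k+1} + s_{k+2} for k <= n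
   exactly when (s_0, s_1) = (s_{n+1}, s_{n+2}) S(q_n) ... S(q_0).  With
   s_{n+2} = 0 the right-hand side is s_{n+1} (infinity S(q_n) ... S(q_0)),
   and since (s_0, s_1) is unimodular the scalar s_{n+1} must be a unit. *)

From mathcomp Require Import all_boot all_order all_algebra.
Set Implicit Arguments.
Unset Strict Implicit.
Unset Printing Implicit Defensive.
Import GRing.Theory.
Local Open Scope ring_scope.

Section RemainderSequences.
Variable A : comPzRingType.
Implicit Types (a b c x y : A) (q s : nat -> A) (w : 'rV[A]_2).

Lemma row2E w : w = row2 (w 0 0) (w 0 1).
Proof. by apply/rowP => -[[|[|//]] j]; rewrite !mxE //=; congr (w _ _); apply/val_inj. Qed.

Lemma row2_inj a b c x : row2 a b = row2 c x -> a = c /\ b = x.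
Proof.
move=> E; have := congr1 (fun w : 'rV[A]_2 => w 0 0) E.
by have := congr1 (fun w : 'rV[A]_2 => w 0 1) E; rewrite !mxE.
Qed.

Lemma scale_row2 c x y : c *: row2 x y = row2 (c * x) (c * y).
Proof. by apply/rowP => j; rewrite !mxE; case: ifP. Qed.

Lemma scale_inf_row c : c *: inf_row A = row2 c 0.
Proof. by rewrite scale_row2 mulr1 mulr0. Qed.

Lemma row2_Smx x y c : row2 x y *m Smx c = row2 (x * c + y) x.
Proof.
apply/rowP => j; rewrite !mxE !big_ord_recl big_ord0 !mxE /=.
by case: j => [[|[|]]] //= _; rewrite ?mulr1 ?mulr0 ?addr0.
Qed.

Definition remainder_seq q n s :=
  forall k, (k <= n)%N -> s k = q k * s k.+1 + s k.+2.

Lemma remainder_seq_Sprod q n s : remainder_seq q n s ->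
  row2 (s 0%N) (s 1%N) = row2 (s n.+1) (s n.+2) *m Sprod q n.
Proof.
move=> rec; elim: n rec => [|n IHn] rec.
  by rewrite /= row2_Smx mulrC -rec.
rewrite /= mulmxA row2_Smx mulrC -rec // IHn // => k le_kn.
by rewrite rec // ltnW.
Qed.

Lemma mulmx_Sprod_remainder_seq w q n a b : w *m Sprod q n = row2 a b ->
  exists s, [/\ s 0%N = a, s 1%N = b, w = row2 (s n.+1) (s n.+2)
              & remainder_seq q n s].
Proof.
elim: n w a b => [|n IHn] w a b.
  rewrite /= {1}[w]row2E row2_Smx => /row2_inj[<- <-].
  exists (nth 0 [:: w 0 0 * q 0%N + w 0 1; w 0 0; w 0 1]).
  by split; [| | exact: row2E | case=> // _; rewrite /= mulrC].
rewrite /= mulmxA => /IHn[s [s0 s1 ws rec]].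
move: ws; rewrite {1}[w]row2E row2_Smx => /row2_inj[sn1 sn2].
(* extend the chain for n, which ends with the entries of w S(q_{n+1}), by w 0 1 *)
pose s' j := if j == n.+3 then w 0 1 else s j.
have s'E j : (j <= n.+2)%N -> s' j = s j.
  by move=> le_j; rewrite /s' ifN_eq // neq_ltn ltnS le_j.
have s'n3 : s' n.+3 = w 0 1 by rewrite /s' eqxx.
exists s'; rewrite s'n3 !s'E // -sn2; split => //; first exact: row2E.
move=> k; rewrite leq_eqVlt => /predU1P[-> | lt_kn].
  by rewrite s'n3 !s'E // -sn1 -sn2 mulrC.
have le_kn1 : (k <= n.+1)%N := ltnW lt_kn.
by rewrite !s'E ?(rec k) // ltnW.
Qed.

Lemma unimodular_scale_unit a b c w :
  unimodular a b -> row2 a b = c *: w -> is_unit c.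
Proof.
case=> x [y xy1]; rewrite [w]row2E scale_row2 => /row2_inj[aE bE].
by exists (w 0 0 * x + w 0 1 * y); rewrite -xy1 aE bE mulrDr !mulrA.
Qed.

Lemma remseq_tail a b s n : s 0%N = a -> s 1%N = b -> s n.+2 = 0 ->
  remseq a b (fun i => s i.+2) n =1 s.
Proof.
move=> <- <- sn2 [|[|j]] //; rewrite /remseq /=.
by case: eqP => [[->] | _] //; rewrite subn2.
Qed.

End RemainderSequences.

Theorem lemma3p6 (A : comPzRingType) (a b : A) (hab : unimodular a b) :
  (exists (n : nat) (q : nat -> A),
      same_class (row2 a b) (inf_row A *m Sprod q n))
  <->
  (exists (n : nat) (q : nat -> A) (r : nat -> A),
      forall k : nat, (k <= n)%N ->
        remseq a b r n k = q k * remseq a b r n k.+1 + remseq a b r n k.+2).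
Proof.
split=> [[n [q [c [_ abE]]]] | [n [q [r rec]]]].
- move: abE; rewrite scalemxAl => /esym/mulmx_Sprod_remainder_seq[s [s0 s1 cE rec]].
  have sn2 : s n.+2 = 0.
    by move: cE; rewrite scale_inf_row => /row2_inj[_ <-].
  exists n, q, (fun i => s i.+2) => k le_kn.
  by rewrite !(remseq_tail s0 s1 sn2); apply: rec.
- have := remainder_seq_Sprod rec; set s := remseq a b r n.
  have sn2 : s n.+2 = 0 by rewrite /s /remseq /= eqxx.
  rewrite sn2 -scale_inf_row -scalemxAl => abE.
  exists n, q, (s n.+1); split=> //.
  exact: unimodular_scale_unit hab abE.
Qed.
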